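(* Let $\mathcal G$ be a finite (not necessarily connected) groupoid and $\alpha=(S_g,\alpha_g)_{g\in\mathcal G}$ a unital global action of $\mathcal G$ on a commutative ring $S=\bigoplus_{y\in\mathcal G_0}S_y$, with $S_g=S1_g$ and $1_g\ne0$ for all $g$, such that $S$ is an $\alpha$-partial Galois extension of $R=S^{\alpha_{\mathcal G}}$. Let $\mathcal G_1,\dots,\mathcal G_r$ be the connected components of $\mathcal G$. Let $\mathcal H$ be a wide subgroupoid of $\mathcal G$, put $\mathcal H_j=\mathcal H\cap\mathcal G_j$, let $\mathcal H_{j,1},\dots,\mathcal H_{j,n_j}$ be the connected components of $\mathcal H_j$ with object sets $Y_{j,1},\dots,Y_{j,n_j}$, and choose $y_{j,i}\in Y_{j,i}$. Then $$S^{\alpha_{\mathcal H}}\simeq\bigoplus_{j=1}^r\bigoplus_{i=1}^{n_j}S_{y_{j,i}}^{\alpha_{\mathcal H_{j,i}(y_{j,i})}}.$$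
   Context: A groupoid is a small category with all morphisms invertible; $\mathcal G_0$ is its object set (identified with identity morphisms), $s(g),t(g)$ source and target, $\mathcal G(x,y)=\{g:s(g)=x,t(g)=y\}$, $\mathcal G(x)=\mathcal G(x,x)$; $gh$ defined iff $s(g)=t(h)$; connected components are full subgroupoids on classes of $x\sim y\iff\mathcal G(x,y)\ne\emptyset$; a subgroupoid is wide if it contains all objects. A partial action $\alpha=(S_g,\alpha_g)_{g\in\mathcal G}$ on a ring $S$: for each $g$, $S_{t(g)}$ is an ideal of $S$, $S_g$ an ideal of $S_{t(g)}$, $\alpha_g:S_{g^{-1}}\to S_g$ a ring isomorphism; $\alpha_x=\mathrm{id}_{S_x}$; for composable $(g,h)$, $\alpha_h^{-1}(S_{g^{-1}}\cap S_h)\subseteq S_{(gh)^{-1}}$ and $\alpha_g\alpha_h(a)=\alpha_{gh}(a)$ there. It is global if $\alpha_g\alpha_h=\alpha_{gh}$ for all composable pairs; unital if $S_g=S1_g$ with $1_g$ a central idempotent. For a subgroupoid $\mathcal K$ and subring $A\subseteq S$, $A^{\alpha_{\mathcal K}}=\{a\in A:\alpha_k(a1_{k^{-1}})=a1_k\ \forall k\in\mathcal K\}$; in particular $S_{y}^{\alpha_{\mathcal H_{j,i}(y)}}$ is the subring of $S_y$ fixed by the isotropy group $\mathcal H_{j,i}(y)$. $S$ is an $\alpha$-partial Galois extension of $R=S^{\alpha_{\mathcal G}}$ if there exist $m\ge1$, $a_i,b_i\in S$ with $\sum_{i=1}^m a_i\alpha_g(b_i1_{g^{-1}})=\delta_{z,g}1_z$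 for all $z\in\mathcal G_0$, $g\in\mathcal G$ (i.e. $1_g$ if $g\in\mathcal G_0$, $0$ otherwise). *)

From HB Require Import structures.
From mathcomp Require Import all_boot all_order all_algebra.
Set Implicit Arguments. Unset Strict Implicit. Unset Printing Implicit Defensive.
Import GRing.Theory.
Local Open Scope ring_scope.

(* Finite groupoids.  Morphisms form a finType T; objects are the     *)
(* identity morphisms (predicate gobj).  gmul g h is g h (g after h), *)
(* meaningful only when src g = tgt h.                                *)
Record groupoid (T : finType) := Groupoid {
  gobj : pred T;
  src : T -> T;
  tgt : T -> T;
  gmul : T -> T -> T;
  ginv : T -> T;
  gobj_src : forall g, gobj (src g);
  gobj_tgt : forall g, gobj (tgt g);
  src_obj : forall x, gobj x -> src x = x;
  tgt_obj : forall x, gobj x -> tgt x = x;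
  src_mul : forall g h, src g = tgt h -> src (gmul g h) = src h;
  tgt_mul : forall g h, src g = tgt h -> tgt (gmul g h) = tgt g;
  gmulA : forall g h k, src g = tgt h -> src h = tgt k ->
            gmul g (gmul h k) = gmul (gmul g h) k;
  gmul1l : forall g, gmul (tgt g) g = g;
  gmul1r : forall g, gmul g (src g) = g;
  src_inv : forall g, src (ginv g) = tgt g;
  tgt_inv : forall g, tgt (ginv g) = src g;
  gmulVg : forall g, gmul (ginv g) g = src g;
  gmulgV : forall g, gmul g (ginv g) = tgt g
}.

Section GroupoidDefs.
Variables (T : finType) (G : groupoid T).

Definition gconnected (x y : T) : Prop :=
  exists g, src G g = x /\ tgt G g = y.

Definition subgroupoid (H : pred T) : Prop :=
  [/\ forall h, H h -> H (src G h) /\ H (tgt G h),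
      forall g h, H g -> H h -> src G g = tgt G h -> H (gmul G g h)
    & forall h, H h -> H (ginv G h)].

Definition wide_subgroupoid (H : pred T) : Prop :=
  subgroupoid H /\ forall x, gobj G x -> H x.

Definition sub_connected (H : pred T) (x y : T) : Prop :=
  exists h, H h /\ src G h = x /\ tgt G h = y.

Definition isotropy (H : pred T) (y : T) : pred T :=
  fun h => H h && (src G h == y) && (tgt G h == y).

Variables (S : comPzRingType) (e : T -> S) (alpha : T -> S -> S).
(* e g = 1_g, S_g = S 1_g ;  alpha g : S_{g^-1} -> S_g *)

Definition inS (g : T) (a : S) : Prop := a * e g = a.

Definition unital_global_action : Prop :=
  (forall g, e g * e g = e g) /\
  (* S_g is an ideal of S_{t(g)} *)
  (forall g, e g * e (tgt G g) = e g) /\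
  (* alpha_g : S_{g^-1} -> S_g is a ring isomorphism *)
  (forall g a, inS (ginv G g) a -> inS g (alpha g a)) /\
  (forall g a b, inS (ginv G g) a -> inS (ginv G g) b ->
     alpha g a = alpha g b -> a = b) /\
  (forall g b, inS g b -> exists2 a, inS (ginv G g) a & alpha g a = b) /\
  (forall g a b, inS (ginv G g) a -> inS (ginv G g) b ->
     alpha g (a + b) = alpha g a + alpha g b
     /\ alpha g (a * b) = alpha g a * alpha g b) /\
  (forall g, alpha g (e (ginv G g)) = e g) /\
  (forall x a, gobj G x -> inS x a -> alpha x a = a) /\
  (* partial-action composition axiom together with globality:
     alpha_g alpha_h = alpha_{gh} as partial maps, i.e. the domain
     alpha_h^{-1}(S_{g^-1} cap S_h) equals S_{(gh)^-1} and the values agree *)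
  (forall g h, src G g = tgt G h ->
     forall a,
       ((inS (ginv G h) a /\ inS (ginv G g) (alpha h a))
          <-> inS (ginv G (gmul G g h)) a)
       /\ (inS (ginv G h) a -> inS (ginv G g) (alpha h a) ->
           alpha g (alpha h a) = alpha (gmul G g h) a)).

(* S = (+)_{y in G_0} S_y  (internal direct sum of the ideals S 1_y) *)
Definition obj_decomposition : Prop :=
  (forall x y, gobj G x -> gobj G y -> x != y -> e x * e y = 0)
  /\ \sum_(x | gobj G x) e x = 1.

Definition fixed (K : pred T) (A : S -> Prop) (a : S) : Prop :=
  A a /\ forall k, K k -> alpha k (a * e (ginv G k)) = a * e k.

Definition partial_galois : Prop :=
  exists m : nat, (0 < m)%N /\
  exists (a b : 'I_m -> S),
    forall g, \sum_(i < m) a i * alpha g (b i * e (ginv G g))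
              = if gobj G g then e g else 0.

End GroupoidDefs.

From HB Require Import structures.
From mathcomp Require Import all_boot all_order all_algebra.
Set Implicit Arguments. Unset Strict Implicit. Unset Printing Implicit Defensive.
Import GRing.Theory.
Local Open Scope ring_scope.

(* The restriction a |-> (a 1_y) to one representative y of each connected
   component of H is the isomorphism.  An H-fixed element is determined by
   these restrictions, since a 1_x = alpha_h (a 1_y) for any h : y -> x in H.
   Conversely an element of S_y fixed by the isotropy group H(y) is spread over
   the component of y by transporting it along arrows of H; the result does not
   depend on the arrow chosen, because two arrows y -> x differ by an element
   of H(y), and gluing these pieces over the orthogonal idempotents 1_x gives
   an H-fixed element of S. *)

Section GroupoidFacts.
Variables (T : finType) (G : groupoid T).

Lemma ginvK g : ginv G (ginv G g) = g.
Proof.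
rewrite -[LHS](gmul1r G) src_inv tgt_inv -(gmulVg G g).
by rewrite gmulA ?src_inv ?tgt_inv // gmulVg src_inv gmul1l.
Qed.

Lemma ginv_obj x : gobj G x -> ginv G x = x.
Proof. by move=> Gx; rewrite -[LHS](gmul1r G) src_inv tgt_obj // gmulVg src_obj. Qed.

Lemma gmulKV g h : tgt G g = tgt G h -> gmul G g (gmul G (ginv G g) h) = h.
Proof.
move=> tgh; rewrite gmulA ?tgt_inv ?src_inv //.
by rewrite gmulgV tgh gmul1l.
Qed.

Lemma sub_connected_of_tgt_eq (H : pred T) h h' :
  subgroupoid G H -> H h -> H h' -> tgt G h = tgt G h' ->
  sub_connected G H (src G h') (src G h).
Proof.
move=> [_ Hmul Hinv] Hh Hh' tgh; exists (gmul G (ginv G h) h').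
have ch : src G (ginv G h) = tgt G h' by rewrite src_inv.
by rewrite src_mul // tgt_mul // tgt_inv; split=> //; apply: Hmul => //; apply: Hinv.
Qed.

End GroupoidFacts.

Section Action.
Variables (T : finType) (G : groupoid T) (S : comPzRingType).
Variables (e : T -> S) (alpha : T -> S -> S).
Hypothesis Hact : unital_global_action G e alpha.

Lemma e_idem g : e g * e g = e g.
Proof. by case: Hact. Qed.

Lemma e_ginv g : e (ginv G g) = e (src G g).
Proof.
have [_ [e_sub_tgt [_ [_ [_ [_ [_ [_ comp]]]]]]]] := Hact.
have [[_ dom] _] := comp (ginv G g) g (src_inv G g) (e (src G g)).
rewrite gmulVg ginv_obj ?gobj_src // in dom.
have [e_src_ginv _] := dom (e_idem _).
have := e_sub_tgt (ginv G g); rewrite tgt_inv => <-.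
by rewrite mulrC e_src_ginv.
Qed.

Lemma e_tgt g : e g = e (tgt G g).
Proof. by rewrite -{1}(ginvK G g) e_ginv src_inv. Qed.

Lemma alpha_inS g a : a * e (src G g) = a -> alpha g a * e (tgt G g) = alpha g a.
Proof.
have [_ [_ [amap _]]] := Hact.
by rewrite -e_ginv -e_tgt; apply: amap.
Qed.

Lemma alpha_obj x a : gobj G x -> a * e x = a -> alpha x a = a.
Proof. by have [_ [_ [_ [_ [_ [_ [_ [aobj _]]]]]]]] := Hact; apply: aobj. Qed.

Lemma alpha_gmul g h a : src G g = tgt G h -> a * e (src G h) = a ->
  alpha g (alpha h a) = alpha (gmul G g h) a.
Proof.
have [_ [_ [_ [_ [_ [_ [_ [_ comp]]]]]]]] := Hact.
move=> cgh ah; apply: (proj2 (comp g h cgh a)); rewrite /inS e_ginv //.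
by rewrite cgh; apply: alpha_inS.
Qed.

Lemma isotropy_fixed_alpha H y k a :
  fixed G e alpha (isotropy G H y) (inS e y) a -> isotropy G H y k ->
  alpha k a = a.
Proof.
move=> [ay fix_a] Hk; have := fix_a k Hk.
case/andP: Hk => /andP[_ /eqP ks] /eqP kt.
by rewrite e_ginv [e k]e_tgt ks kt ay.
Qed.

Lemma fixed_transport H a h : fixed G e alpha H (fun _ => True) a -> H h ->
  alpha h (a * e (src G h)) = a * e (tgt G h).
Proof. by move=> [_ fix_a] /fix_a; rewrite e_ginv -e_tgt. Qed.

Lemma fixed_restrict H y a : fixed G e alpha H (fun _ => True) a ->
  fixed G e alpha (isotropy G H y) (inS e y) (a * e y).
Proof.
move=> [_ fix_a]; split; first by rewrite /inS -mulrA e_idem.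
move=> k /andP[/andP[Hk /eqP ks] /eqP kt].
rewrite e_ginv [e k]e_tgt ks kt -mulrA e_idem.
by have := fix_a k Hk; rewrite e_ginv [e k]e_tgt ks kt.
Qed.

Lemma mul_restrict a b y : (a * b) * e y = (a * e y) * (b * e y).
Proof. by rewrite mulrACA e_idem. Qed.

Section Components.
Variables (H : pred T) (I : finType) (yI : I -> T).
Hypothesis yI_cover : forall x, gobj G x -> exists p, sub_connected G H (yI p) x.

Lemma fixed_eq_on_reps a b :
  \sum_(x | gobj G x) e x = 1 ->
  fixed G e alpha H (fun _ => True) a -> fixed G e alpha H (fun _ => True) b ->
  (forall p, a * e (yI p) = b * e (yI p)) -> a = b.
Proof.
move=> e_sum fix_a fix_b ab.
rewrite -(mulr1 a) -(mulr1 b) -e_sum !mulr_sumr; apply: eq_bigr => x /yI_cover.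
move=> [p [h [Hh [hs <-]]]].
by rewrite -!(fixed_transport _ Hh) // hs ab.
Qed.

Hypothesis HH : subgroupoid G H.
Hypothesis H_obj : forall x, gobj G x -> H x.
Hypothesis yI_obj : forall p, gobj G (yI p).
Hypothesis yI_disjoint : forall p q, sub_connected G H (yI p) (yI q) -> p = q.
Hypothesis e_orth : forall x x', gobj G x -> gobj G x' -> x != x' -> e x * e x' = 0.
Variable f : I -> S.
Hypothesis f_fixed : forall p, fixed G e alpha (isotropy G H (yI p)) (inS e (yI p)) (f p).

Lemma transport_unique h h' p p' :
  H h -> H h' -> src G h = yI p -> src G h' = yI p' -> tgt G h = tgt G h' ->
  alpha h (f p) = alpha h' (f p').
Proof.
move=> Hh Hh' hs h's thh'.
have pp' : p' = p.
  by apply: yI_disjoint; rewrite -hs -h's; apply: sub_connected_of_tgt_eq.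
subst p'; have [_ HHmul HHinv] := HH.
have gs : src G (ginv G h) = tgt G h' by rewrite src_inv.
have Hg : isotropy G H (yI p) (gmul G (ginv G h) h').
  rewrite /isotropy HHmul ?HHinv // src_mul // tgt_mul // tgt_inv hs h's.
  by rewrite !eqxx.
have [fp _] := f_fixed p.
rewrite -{1}(isotropy_fixed_alpha (f_fixed p) Hg) alpha_gmul ?gmulKV //.
  by rewrite tgt_mul // tgt_inv.
by rewrite src_mul // h's.
Qed.

(* Which arrow is picked does not matter, by [transport_unique]. *)
Definition transport_to (x : T) : S :=
  if [pick hp : T * I | H hp.1 && (src G hp.1 == yI hp.2) && (tgt G hp.1 == x)]
  is Some (h, p) then alpha h (f p) else 0.

Definition glue : S := \sum_(x | gobj G x) transport_to x.

Lemma transport_to_inS x : transport_to x * e x = transport_to x.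
Proof.
rewrite /transport_to; case: pickP => [[h p] /andP[/andP[_ /eqP hs] /eqP <-]|_].
  by apply: alpha_inS; rewrite hs; case: (f_fixed p).
by rewrite mul0r.
Qed.

Lemma glue_mul_e x : gobj G x -> glue * e x = transport_to x.
Proof.
move=> Gx; rewrite /glue mulr_suml (bigD1 x) //= big1 ?addr0.
  exact: transport_to_inS.
move=> x' /andP[Gx' x'x].
by rewrite -transport_to_inS -mulrA e_orth ?mulr0.
Qed.

Lemma glue_transport h p : H h -> src G h = yI p ->
  glue * e (tgt G h) = alpha h (f p).
Proof.
move=> Hh hs; rewrite glue_mul_e ?gobj_tgt // /transport_to.
case: pickP => [[h' p'] /andP[/andP[Hh' /eqP h's] /eqP h't]|none].
  exact: transport_unique.
by move: (none (h, p)); rewrite /= Hh hs !eqxx.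
Qed.

Lemma glue_fixed : fixed G e alpha H (fun _ => True) glue.
Proof.
split=> // k Hk; rewrite e_ginv [e k]e_tgt.
have [p [h [Hh [hs ht]]]] := yI_cover (gobj_src G k).
have ckh : src G k = tgt G h by rewrite ht.
have [_ HHmul _] := HH.
rewrite -ht (glue_transport Hh hs) alpha_gmul //; last first.
  by rewrite hs; case: (f_fixed p).
rewrite -(tgt_mul ckh) (glue_transport (p := p)) ?src_mul //.
exact: HHmul.
Qed.

Lemma glue_at_rep p : glue * e (yI p) = f p.
Proof.
have Gy := yI_obj p.
rewrite -{1}(tgt_obj Gy) (glue_transport (p := p) (H_obj Gy)) ?src_obj //.
by apply: alpha_obj => //; case: (f_fixed p).
Qed.

End Components.

End Action.

Theorem proposition5p14
  (T : finType) (G : groupoid T) (S : comPzRingType)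
  (e : T -> S) (alpha : T -> S -> S)
  (Hact : unital_global_action G e alpha)
  (Hne0 : forall g, e g != 0)
  (Hdec : obj_decomposition G e)
  (Hgal : partial_galois G e alpha)
  (* connected components G_1, ..., G_r of G, given by their object sets *)
  (r : nat) (Gc : 'I_r -> pred T)
  (HGc_obj : forall j x, Gc j x -> gobj G x)
  (HGc_ne : forall j, exists x, Gc j x)
  (HGc_cov : forall x, gobj G x -> exists j, Gc j x)
  (HGc_comp : forall j x y, Gc j x -> gobj G y -> (Gc j y <-> gconnected G x y))
  (HGc_inj : forall j j' x, Gc j x -> Gc j' x -> j = j')
  (* wide subgroupoid H *)
  (H : pred T) (HH : wide_subgroupoid G H)
  (* chosen objects y_{j,i}, one in each connected component H_{j,i}
     of H_j = H cap G_j *)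
  (n : 'I_r -> nat) (y : forall j : 'I_r, 'I_(n j) -> T)
  (Hy_in : forall j i, Gc j (y j i))
  (Hy_dist : forall j i i', sub_connected G H (y j i) (y j i') -> i = i')
  (Hy_cov : forall j x, Gc j x -> exists i, sub_connected G H (y j i) x) :
  exists phi : S -> forall j : 'I_r, 'I_(n j) -> S,
    [/\ (forall a, fixed G e alpha H (fun _ => True) a ->
           forall j i, fixed G e alpha (isotropy G H (y j i))
                         (inS e (y j i)) (phi a j i)),
        (forall a b, fixed G e alpha H (fun _ => True) a ->
           fixed G e alpha H (fun _ => True) b ->
           (forall j i, phi a j i = phi b j i) -> a = b),
        (forall f : forall j : 'I_r, 'I_(n j) -> S,
           (forall j i, fixed G e alpha (isotropy G H (y j i))
                          (inS e (y j i)) (f j i)) ->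
           exists2 a, fixed G e alpha H (fun _ => True) a &
                      forall j i, phi a j i = f j i),
        (forall a b, fixed G e alpha H (fun _ => True) a ->
           fixed G e alpha H (fun _ => True) b ->
           forall j i, phi (a + b) j i = phi a j i + phi b j i
                       /\ phi (a * b) j i = phi a j i * phi b j i)
      & (forall j i, phi 1 j i = e (y j i))].
Proof.
have [e_orth e_sum] := Hdec; have [HHsub H_obj] := HH.
pose yI (p : {j : 'I_r & 'I_(n j)}) := y (tag p) (tagged p).
have yI_cover x : gobj G x -> exists p, sub_connected G H (yI p) x.
  by move=> /HGc_cov[j /Hy_cov[i ?]]; exists (Tagged (fun j => 'I_(n j)) i).
have yI_disjoint p q : sub_connected G H (yI p) (yI q) -> p = q.
  case: p q => [j i] [j' i'] conn; have [h [_ hst]] := conn.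
  have Gc_j : Gc j (y j' i').
    by apply/(HGc_comp _ _ _ (Hy_in j i) (HGc_obj _ _ (Hy_in j' i'))); exists h.
  have jj' := HGc_inj _ _ _ Gc_j (Hy_in j' i'); subst j'.
  by rewrite (Hy_dist j i i' conn).
exists (fun a j i => a * e (y j i)); split.
- by move=> a fix_a j i; apply: fixed_restrict.
- move=> a b fix_a fix_b ab.
  by apply: (fixed_eq_on_reps Hact yI_cover e_sum fix_a fix_b) => -[j i]; apply: ab.
- move=> f f_fixed; pose fI (p : {j : 'I_r & 'I_(n j)}) := f (tag p) (tagged p).
  have fI_fixed p : fixed G e alpha (isotropy G H (yI p)) (inS e (yI p)) (fI p).
    exact: f_fixed.
  have yI_obj p : gobj G (yI p) := HGc_obj _ _ (Hy_in _ _).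
  exists (glue G alpha H yI fI).
    exact: (glue_fixed Hact yI_cover HHsub yI_disjoint e_orth fI_fixed).
  move=> j i.
  exact: (glue_at_rep Hact HHsub H_obj yI_obj yI_disjoint e_orth fI_fixed
            (Tagged _ i)).
- by move=> a b _ _ j i; split; [apply: mulrDl | apply: (mul_restrict Hact)].
- by move=> j i; rewrite mul1r.
Qed.
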